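(* If the feasibility requirement of an abstract network design problem $P$ is memoryless, then $P$ admits a min operator (with factor $O(1)$).
   Context: Abstract network design: instance = connected graph $G=(V,E)$ with edge lengths $d\ge0$, online requests $Z_i\subseteq V$; with $\mathcal Z_i=\bigcup_{j\le i}Z_j$ the algorithm irrevocably outputs at step $i$ a response $(R_i,C_i)$, $R_i\subseteq E$, $C_i$ an ordered list of pairs of $\binom{\mathcal Z_i}{2}$. Feasibility functions $\mathcal F_i$ map $(C_1,\ldots,C_i)$ to $\{0,1\}$; a solution is feasible iff $\mathcal F_i(C_1,\ldots,C_i)=1$ and each pair of $C_j$ is connected in $R_j$, $j\le i$; it must be feasible at every step. Load function $\rho$ on sets of time steps: subadditive, monotone increasing, zero exactly on $\emptyset$; cost $=\sum_e d(e)\rho(\{j:e\in R_j\})$. The feasibility function is memoryless if whenever $\mathcal F_i(C_1,\ldots,C_i)=1$, then for all $(C'_1,\ldots,C'_{i-1})$ with $\mathcal F_{i-1}(C'_1,\ldots,C'_{i-1})=1$ we have $\mathcal F_i(C'_1,\ldots,C'_{i-1},C_i)=1$. $P$ admits a min operator with factor $\eta$ if for any two deterministic online algorithms $A,B$ there is a deterministic online algorithm $C$ with $\mathrm{cost}(C)\le\eta\min\{\mathrm{cost}(A),\mathrm{cost}(B)\}$ on every request sequence; ''admits a min operator'' means with $\eta=O(1)$. *)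

From HB Require Import structures.
From mathcomp Require Import all_boot all_order all_algebra.
Set Implicit Arguments. Unset Strict Implicit. Unset Printing Implicit Defensive.
Import Order.TTheory GRing.Theory Num.Theory.
Local Open Scope ring_scope.

Section AbstractNetworkDesign.
Variable R : realFieldType.

(* An instance: a graph with vertex set 'I_nv, edge set 'I_ne (multigraph,
   edge e joins the endpoints [ends e]) and edge lengths [len]. *)
Record instance := Instance {
  nv : nat;
  ne : nat;
  ends : 'I_ne -> 'I_nv * 'I_nv;
  len : 'I_ne -> R }.

Definition vtx (I : instance) := 'I_(nv I).
Definition edge (I : instance) := 'I_(ne I).

Definition graph_adj (I : instance) (S : {set edge I}) : rel (vtx I) :=
  fun u v => [exists e in S, (ends e == (u, v)) || (ends e == (v, u))].

Definition valid_instance (I : instance) : Prop :=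
  (forall u v : vtx I, connect (graph_adj [set: edge I]) u v) /\
  (forall e : edge I, 0 <= len e).

Definition response (I : instance) :=
  ({set edge I} * seq (vtx I * vtx I))%type.

(* A deterministic online algorithm: on instance I, after having received the
   requests Z_1, ..., Z_i (the list Zs of length i), it outputs the response
   of step i.  Earlier outputs are determined by earlier prefixes. *)
Definition algorithm := forall I : instance, seq {set vtx I} -> response I.

(* A problem: feasibility functions F_i (F_i(C_1..C_i) = feas I [Z_1..Z_i]
   [C_1..C_i]) and a load function rho on sets of time steps. *)
Record problem := Problem {
  feas : forall I : instance, seq {set vtx I} -> seq (seq (vtx I * vtx I)) -> bool;
  load : pred nat -> R }.

Definition load_function (rho : pred nat -> R) : Prop :=
  (forall S T : pred nat, rho (fun x => S x || T x) <= rho S + rho T) /\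
  (forall S T : pred nat, (forall x, S x -> T x) -> rho S <= rho T) /\
  (forall S : pred nat, rho S = 0 <-> (forall x, ~~ S x)).

Definition requested (I : instance) (Zs : seq {set vtx I}) : {set vtx I} :=
  \bigcup_(Z <- Zs) Z.

Definition valid_pairs (I : instance) (Zs : seq {set vtx I})
    (C : seq (vtx I * vtx I)) : bool :=
  all (fun p => [&& p.1 != p.2, p.1 \in requested Zs & p.2 \in requested Zs]) C.

Definition pairs_connected (I : instance) (Rj : {set edge I})
    (C : seq (vtx I * vtx I)) : bool :=
  all (fun p => connect (graph_adj Rj) p.1 p.2) C.

(* output of A at (1-based) step j on request sequence Zs *)
Definition out (A : algorithm) (I : instance) (Zs : seq {set vtx I}) (j : nat)
  : response I := A I (take j Zs).

Definition feasible_upto (P : problem) (A : algorithm) (I : instance)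
    (Zs : seq {set vtx I}) : Prop :=
  forall i : nat, (1 <= i <= size Zs)%N ->
    [&& feas P (take i Zs) [seq (out A Zs j).2 | j <- iota 1 i],
        valid_pairs (take i Zs) (out A Zs i).2
      & pairs_connected (out A Zs i).1 (out A Zs i).2]%N.

Definition valid_alg (P : problem) (A : algorithm) : Prop :=
  forall I : instance, valid_instance I ->
    forall Zs : seq {set vtx I}, feasible_upto P A Zs.

Definition cost (P : problem) (A : algorithm) (I : instance)
    (Zs : seq {set vtx I}) : R :=
  \sum_(e : edge I)
     len e * load P (fun j => (1 <= j <= size Zs)%N && (e \in (out A Zs j).1)).

Definition memoryless (P : problem) : Prop :=
  forall I : instance, valid_instance I ->
  forall (Zs : seq {set vtx I}) (Cs Cs' : seq (seq (vtx I * vtx I))),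
    (2 <= size Zs)%N -> size Cs = size Zs -> size Cs' = (size Zs).-1 ->
    feas P Zs Cs -> feas P (take (size Zs).-1 Zs) Cs' ->
    feas P Zs (rcons Cs' (last [::] Cs)).

Definition min_operator (P : problem) (eta : R) : Prop :=
  forall A B : algorithm, valid_alg P A -> valid_alg P B ->
  exists C : algorithm, valid_alg P C /\
    forall I : instance, valid_instance I -> forall Zs : seq {set vtx I},
      cost P C Zs <= eta * Num.min (cost P A Zs) (cost P B Zs).

Definition admits_min_operator (P : problem) : Prop :=
  exists eta : R, min_operator P eta.

End AbstractNetworkDesign.

From mathcomp Require Import all_boot all_order all_algebra.
From mathcomp Require Import lra zify.
Set Implicit Arguments. Unset Strict Implicit. Unset Printing Implicit Defensive.
Import Order.TTheory GRing.Theory Num.Theory.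
Local Open Scope ring_scope.

(** Run [A] and [B] side by side on the prefixes of the request sequence and
   let the combined algorithm copy the responses of the one it currently
   follows, switching to the other one as soon as the current one has cost more
   than twice as much on the prefix seen so far.  Memorylessness makes the
   spliced history feasible, since only the last response matters.  For the
   cost, subadditivity of the load splits the combined cost at the last switch
   [p]: the part after [p] is paid by the current algorithm, and an induction
   shows that the part up to [p] is at most four times the cost of the current
   algorithm and twice that of the other one.  This gives a factor 5. *)

Section LoadFunction.
Variables (R : realFieldType) (rho : pred nat -> R).
Hypothesis rho_load : load_function rho.

Lemma load_subadd (S T : pred nat) : rho (fun x => S x || T x) <= rho S + rho T.
Proof. by case: rho_load. Qed.

Lemma load_mono (S T : pred nat) : (forall x, S x -> T x) -> rho S <= rho T.
Proof. by case: rho_load => _ [mono _]; apply: mono. Qed.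

Lemma eq_load (S T : pred nat) : S =1 T -> rho S = rho T.
Proof. by move=> eqST; apply/le_anti; rewrite !load_mono // => x; rewrite eqST. Qed.

Lemma load_pred0 (S : pred nat) : (forall x, ~~ S x) -> rho S = 0.
Proof. by case: rho_load => _ [_ rho0] /rho0. Qed.

Lemma load_ge0 (S : pred nat) : 0 <= rho S.
Proof. by rewrite -(@load_pred0 pred0) //; apply: load_mono. Qed.

End LoadFunction.

Section PrefixCost.
Variables (R : realFieldType) (E : finType) (len : E -> R) (rho : pred nat -> R).
Hypothesis rho_load : load_function rho.
Hypothesis len_ge0 : forall e, 0 <= len e.

Definition prefix_cost (f : nat -> {set E}) (i : nat) : R :=
  \sum_(e : E) len e * rho (fun j => (1 <= j <= i)%N && (e \in f j)).

Lemma prefix_cost_ge0 f i : 0 <= prefix_cost f i.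
Proof. by apply: sumr_ge0 => e _; rewrite mulr_ge0 ?load_ge0. Qed.

Lemma prefix_cost0 f : prefix_cost f 0 = 0.
Proof. by apply: big1 => e _; rewrite load_pred0 ?mulr0 // => -[]. Qed.

Lemma le_prefix_cost f i i' : (i <= i')%N -> prefix_cost f i <= prefix_cost f i'.
Proof.
move=> le_ii'; apply: ler_sum => e _; rewrite ler_wpM2l ?load_mono // => j.
by case/andP=> /andP[-> le_ji] ->; rewrite (leq_trans le_ji).
Qed.

Lemma eq_prefix_cost f g i :
  (forall j, (1 <= j <= i)%N -> f j = g j) -> prefix_cost f i = prefix_cost g i.
Proof.
move=> eq_fg; apply: eq_bigr => e _; congr (_ * _); apply: eq_load => // j /=.
by case: (boolP (1 <= j <= i)%N) => // /eq_fg ->.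
Qed.

Lemma prefix_cost_splice f g p i :
  (forall j, (p < j <= i)%N -> f j = g j) ->
  prefix_cost f i <= prefix_cost f p + prefix_cost g i.
Proof.
move=> eq_fg; rewrite -big_split /=; apply: ler_sum => e _; rewrite -mulrDr.
rewrite ler_wpM2l // (le_trans _ (load_subadd rho_load _ _)) // load_mono // => j.
case/andP=> /andP[j_gt0 le_ji] fje /=; rewrite j_gt0 /=.
case: (leqP j p) => [_|lt_pj]; first by rewrite fje.
by rewrite le_ji -eq_fg ?fje ?lt_pj.
Qed.

End PrefixCost.

Section Switching.
Variables (R : realFieldType) (E : finType) (len : E -> R) (rho : pred nat -> R).
Hypothesis rho_load : load_function rho.
Hypothesis len_ge0 : forall e, 0 <= len e.
Variables (fA fB : nat -> {set E}) (s : nat -> bool) (n : nat).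

Let alt (b : bool) := if b then fA else fB.
Local Notation K := (prefix_cost len rho).

Hypothesis switch_rule : forall i, (i < n)%N ->
  s i.+1 = if 2 * K (alt (~~ s i)) i.+1 < K (alt (s i)) i.+1 then ~~ s i else s i.

Definition follow j := alt (s j) j.

Lemma switching_invariant i : (i <= n)%N ->
  K (alt (s i)) i <= 2 * K (alt (~~ s i)) i /\
  exists p, [/\ forall j, (p < j <= i)%N -> s j = s i,
    K follow p <= 4 * K (alt (s i)) i & K follow p <= 2 * K (alt (~~ s i)) i].
Proof.
elim: i => [_|i IHi lt_in].
  rewrite !prefix_cost0 // !mulr0; split=> //.
  by exists 0%N; rewrite prefix_cost0 //; split=> // j; lia.
have [cur_le [p [no_switch follow_cur follow_oth]]] := IHi (ltnW lt_in).
have mono b := le_prefix_cost rho_load len_ge0 (alt b) (leqnSn i).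
have ge0 b := prefix_cost_ge0 rho_load len_ge0 (alt b) i.+1.
have [cur_mono oth_mono] := (mono (s i), mono (~~ s i)).
have [cur_ge0 oth_ge0] := (ge0 (s i), ge0 (~~ s i)).
case: (ltP (2 * K (alt (~~ s i)) i.+1) (K (alt (s i)) i.+1)) => [switch|stay].
- have flip : s i.+1 = ~~ s i by rewrite switch_rule // switch.
  have splice : K follow i <= K follow p + K (alt (s i)) i.
    by apply: prefix_cost_splice => // j lt_pj; rewrite /follow no_switch.
  (* With [c'] the new current cost: [K follow i <= 2 c' + 2 c'], and [4 c' < 2 c]
     for the old one [c] by the switching condition. *)
  rewrite flip negbK; split; first lra.
  exists i; split; [|lra|lra].
  by move=> j lt_ij; have -> : j = i.+1 by lia.
- have keep : s i.+1 = s i by rewrite switch_rule // ltNge stay.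
  rewrite keep; split; first lra.
  exists p; split; [|lra|lra].
  move=> j /andP[lt_pj]; rewrite leq_eqVlt ltnS => /predU1P[->//|le_ji].
  by rewrite no_switch ?lt_pj.
Qed.

Lemma switching_cost_bound : K follow n <= 5 * Num.min (K fA n) (K fB n).
Proof.
have [cur_le [p [no_switch follow_cur follow_oth]]] := switching_invariant (leqnn n).
have splice : K follow n <= K follow p + K (alt (s n)) n.
  by apply: prefix_cost_splice => // j lt_pj; rewrite /follow no_switch.
have cur_ge0 := prefix_cost_ge0 rho_load len_ge0 (alt (s n)) n.
have oth_ge0 := prefix_cost_ge0 rho_load len_ge0 (alt (~~ s n)) n.
rewrite minr_pMr // le_min.
move: cur_le follow_cur follow_oth splice cur_ge0 oth_ge0; rewrite /alt.
by case: (s n) => /= *; apply/andP; split; lra.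
Qed.

End Switching.

Lemma map_iota1S (T : Type) (f : nat -> T) i :
  [seq f j | j <- iota 1 i.+1] = rcons [seq f j | j <- iota 1 i] (f i.+1).
Proof. by rewrite -(addn1 i) iotaD map_cat -cats1 add1n addn1. Qed.

Section SwitchingAlgorithm.
Variables (R : realFieldType) (P : problem R) (A B : algorithm R).
Hypothesis load_P : load_function (load P).

Definition pick (b : bool) : algorithm R := if b then A else B.

Fixpoint switch_choice (I : instance R) (Zs : seq {set vtx I}) (i : nat) : bool :=
  if i is i'.+1 then
    let b := switch_choice Zs i' in
    if 2 * cost P (pick (~~ b)) (take i Zs) < cost P (pick b) (take i Zs)
    then ~~ b else b
  else true.

Definition switching_alg : algorithm R :=
  fun I Zs => pick (switch_choice Zs (size Zs)) Zs.

Lemma switch_choice_take I (Zs : seq {set vtx I}) j k :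
  (k <= j)%N -> switch_choice (take j Zs) k = switch_choice Zs k.
Proof. by elim: k => [//|k IHk] lt_kj /=; rewrite IHk ?(ltnW lt_kj) ?take_takel. Qed.

Lemma out_switching_alg I (Zs : seq {set vtx I}) j : (j <= size Zs)%N ->
  out switching_alg Zs j = out (pick (switch_choice Zs j)) Zs j.
Proof. by move=> le_jZs; rewrite /out /switching_alg size_takel ?switch_choice_take. Qed.

Lemma cost_take (X : algorithm R) I (Zs : seq {set vtx I}) i : (i <= size Zs)%N ->
  cost P X (take i Zs) = prefix_cost (@len R I) (load P) (fun j => (out X Zs j).1) i.
Proof.
move=> le_iZs; rewrite /cost size_takel //.
apply: eq_bigr => e _; congr (_ * _); apply: eq_load => // j /=.
by case: (boolP (1 <= j <= i)%N) => //= /andP[_ le_ji]; rewrite /out take_takel.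
Qed.

Lemma switching_alg_cost I (Zs : seq {set vtx I}) : valid_instance I ->
  cost P switching_alg Zs <= 5 * Num.min (cost P A Zs) (cost P B Zs).
Proof.
move=> [_ len_ge0].
have cost_all X : cost P X Zs = cost P X (take (size Zs) Zs) by rewrite take_size.
rewrite !(cost_all A) !(cost_all B) cost_all !cost_take //.
pose edges X j := (out X Zs j).1.
rewrite (@eq_prefix_cost _ _ _ _ load_P (edges switching_alg)
  (follow (edges A) (edges B) (switch_choice Zs))).
  apply: switching_cost_bound => // i lt_iZs /=.
  by rewrite !cost_take //; case: (switch_choice Zs i).
move=> j /andP[_ le_jZs]; rewrite /follow /edges out_switching_alg //.
by case: (switch_choice Zs j).
Qed.

Hypotheses (P_memoryless : memoryless P) (A_valid : valid_alg P A) (B_valid : valid_alg P B).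

Lemma pick_valid b : valid_alg P (pick b).
Proof. by case: b. Qed.

Lemma switching_alg_history_feas I (Zs : seq {set vtx I}) i :
  valid_instance I -> (1 <= i <= size Zs)%N ->
  feas P (take i Zs) [seq (out switching_alg Zs j).2 | j <- iota 1 i].
Proof.
move=> valid_I; elim: i => [//|i IHi] i_range.
have /and3P[feas_pick _ _] := pick_valid (switch_choice Zs i.+1) valid_I i_range.
rewrite map_iota1S out_switching_alg //.
case: i IHi i_range feas_pick => [|i] IHi i_range feas_pick; first exact: feas_pick.
pose hist X k := [seq (out X Zs j).2 | j <- iota 1 k].
have splice := @P_memoryless I valid_I (take i.+2 Zs)
  (hist (pick (switch_choice Zs i.+2)) i.+2) (hist switching_alg i.+1).
rewrite size_takel // !size_map !size_iota take_takel // in splice.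
have := splice isT erefl erefl feas_pick (IHi (ltnW i_range)).
by rewrite [X in last _ X]map_iota1S last_rcons.
Qed.

Lemma switching_alg_valid : valid_alg P switching_alg.
Proof.
move=> I valid_I Zs i i_range; rewrite switching_alg_history_feas //.
rewrite out_switching_alg; last by case/andP: i_range.
by have /and3P[_ -> ->] := pick_valid (switch_choice Zs i) valid_I i_range.
Qed.

End SwitchingAlgorithm.

Theorem corollaryC4 (R : realFieldType) (P : problem R) :
  load_function (load P) -> memoryless P -> admits_min_operator P.
Proof.
move=> load_P P_memoryless; exists 5 => A B A_valid B_valid.
exists (switching_alg P A B); split; first exact: switching_alg_valid.
by move=> I valid_I Zs; apply: switching_alg_cost.
Qed.
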